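(* Let $f(x)$ be a real polynomial of degree $K > 1$ with positive leading coefficient, such that all roots of $f'(x)$ are real. Let $k$ be the number of distinct roots of $f'(x)$ that are not inflection points of $f(x)$, and if $k > 0$ sort them as $\alpha_k < \cdots < \alpha_1$; set $\alpha_0 = +\infty$, $f(\alpha_0) = 1$, $\alpha_{k+1} = -\infty$, $f(\alpha_{k+1}) = (-1)^K$. Then: (I) if $k > 0$, then for $i = 1,\ldots,k$, $\alpha_i$ is a local minimum of $f$ if $i$ is odd and a local maximum of $f$ if $i$ is even; (II) $k$ and $K$ have opposite parity; (III) for each $i = 1,\ldots,k+1$, $f$ is monotone on $(\alpha_i,\alpha_{i-1})$; (IV) for $i = 1,\ldots,k+1$: if $f(\alpha_i)f(\alpha_{i-1}) \geq 0$ then $f$ has no root in $(\alpha_i,\alpha_{i-1})$; if $f(\alpha_i)f(\alpha_{i-1}) < 0$ then $f$ has a unique root in $(\alpha_i,\alpha_{i-1})$, which is either simple or an inflection point of $f$; (V) if every root $\beta$ of $f'$ with $\mathrm{ord}_\beta(f'(x)) > 1$ is also a root of $f$, then for each $i = 1,\ldots,k+1$ with $f(\alpha_i)f(\alpha_{i-1}) \geq 0$, $f'$ has no root in $(\alpha_i,\alpha_{i-1})$; (VI) $f$ has only real roots if and only if $S(-\infty,+\infty) = 1$, where for $x_1 < x_2$ in $\mathbb{R}\cup\{\pm\infty\}$, $S(x_1,x_2) = \sum_{r \in [x_1,x_2)\cap\mathbb{R}} \left(\mathrm{ord}_r(f(x)) - \mathrm{ord}_r(f'(x))\right)$.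
   Context: $\mathrm{ord}_\gamma(f(x))$ denotes the order of vanishing of $f$ at $\gamma$ (zero if $\gamma$ is not a root); only finitely many terms in $S(x_1,x_2)$ are nonzero. *)

From HB Require Import structures.
From mathcomp Require Import all_boot all_order all_algebra.
From mathcomp Require Import reals.
From mathcomp Require Import complex.
Set Implicit Arguments. Unset Strict Implicit. Unset Printing Implicit Defensive.
Import Order.TTheory GRing.Theory Num.Theory.
Local Open Scope ring_scope.
Local Open Scope complex_scope.

Definition real_rooted (R : realType) (p : {poly R}) : Prop :=
  forall z : R[i], root (map_poly (fun x : R => x%:C) p) z -> Im z = 0.

Local Close Scope complex_scope.

Definition inflection (R : realType) (f : {poly R}) (x : R) : Prop :=
  exists2 e : R, 0 < e &
    ((forall y, x - e < y < x -> (f^`(2)).[y] < 0) /\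
     (forall y, x < y < x + e -> 0 < (f^`(2)).[y]))
 \/ ((forall y, x - e < y < x -> 0 < (f^`(2)).[y]) /\
     (forall y, x < y < x + e -> (f^`(2)).[y] < 0)).

Definition local_min (R : realType) (f : {poly R}) (a : R) : Prop :=
  exists2 e : R, 0 < e & forall y, `|y - a| < e -> f.[a] <= f.[y].

Definition local_max (R : realType) (f : {poly R}) (a : R) : Prop :=
  exists2 e : R, 0 < e & forall y, `|y - a| < e -> f.[y] <= f.[a].

(* With s = [:: alpha_1; ...; alpha_k] (so alpha_i = s`_(i.-1)), alpha_0 = +oo
   and alpha_(k+1) = -oo:  seg s i x  <=>  x \in (alpha_i, alpha_(i-1)). *)
Definition seg (R : realType) (s : seq R) (i : nat) (x : R) : bool :=
  ((size s < i)%N || (s`_i.-1 < x)) && ((i <= 1)%N || (x < s`_i.-2)).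

(* f(alpha_i), with the conventions f(alpha_0) = 1, f(alpha_(k+1)) = (-1)^K. *)
Definition fval (R : realType) (f : {poly R}) (s : seq R) (i : nat) : R :=
  if i == 0%N then 1
  else if (size s < i)%N then (-1) ^+ (size f).-1
  else f.[s`_i.-1].

Definition monotone_on (R : realType) (f : {poly R}) (P : R -> bool) : Prop :=
  (forall x y, P x -> P y -> x <= y -> f.[x] <= f.[y]) \/
  (forall x y, P x -> P y -> x <= y -> f.[y] <= f.[x]).

From HB Require Import structures.
From mathcomp Require Import all_boot all_order all_algebra.
From mathcomp Require Import reals complex polyrcf polyorder.
From mathcomp Require Import ring lra zify.
Import Order.TTheory GRing.Theory Num.Theory.
Local Open Scope ring_scope.
Set Implicit Arguments. Unset Strict Implicit. Unset Printing Implicit Defensive.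

(* Since f' is real-rooted with positive leading coefficient, f' = c \prod_r (X - r)^(m_r)
   with c > 0.  A critical point r is an inflection point of f exactly when m_r is even, so
   the alpha_i are the roots of f' of odd multiplicity and f'(y) \prod_i (y - alpha_i) >= 0
   for every y.  On (alpha_i, alpha_(i-1)) exactly i - 1 of the alpha's exceed y, hence
   (-1)^(i-1) f' >= 0 there, and f is strictly monotone on the closed segment, in a
   direction given by the parity of i: this yields (I) and (III), and with the sign of f at
   +oo and -oo and the intermediate value theorem also (IV) and (V).  Counting multiplicities
   modulo 2 gives k = K - 1 (mod 2), i.e. (II).  Finally f is real-rooted iff its real roots
   counted with multiplicity number K, while those of f' number K - 1: this is (VI). *)

Section Multiplicity.
Variable F : fieldType.
Implicit Types (p q : {poly F}) (x : F).

Lemma mup_gt0 p x : p != 0 -> (0 < mup x p)%N = root p x.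
Proof. by move=> p0; rewrite -XsubC_dvd // dvdp_XsubCl. Qed.

Lemma mup_factor p x : p != 0 ->
  exists2 q, p = q * ('X - x%:P) ^+ mup x p & ~~ root q x.
Proof.
move=> p0; set m := mup x p.
have dvd : ('X - x%:P) ^+ m %| p by rewrite -mup_geq.
exists (p %/ ('X - x%:P) ^+ m); first by rewrite divpK.
apply: contraT => /negbNE; rewrite -dvdp_XsubCl => /dvdpP [r hr].
suff : (m < m)%N by rewrite ltnn.
by rewrite mup_geq // -/m exprS -(divpK dvd) hr -mulrA dvdp_mull.
Qed.

Lemma poly_factor_roots (rs : seq F) p : uniq rs -> p != 0 ->
  (forall x, root p x -> x \in rs) ->
  exists2 Q, p = Q * \prod_(r <- rs) ('X - r%:P) ^+ mup r p & forall x, ~~ root Q x.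
Proof.
elim: rs p => [|r rs IH] p urs p0 prs.
  by exists p => [|x]; rewrite ?big_nil ?mulr1 //; apply/negP => /prs.
case/andP: urs => r_rs urs; have [q hq qr] := mup_factor r p0.
have q0 : q != 0 by apply: contraNneq p0 => q0; rewrite hq q0 mul0r.
have qrs : forall x, root q x -> x \in rs.
  move=> x qx; have /prs : root p x by rewrite hq rootM qx.
  by rewrite in_cons => /predU1P [xr|//]; move: qr; rewrite -xr qx.
have [Q hQ Qroot] := IH q urs q0 qrs; exists Q => //.
rewrite big_cons {1}hq {1}hQ -mulrA [X in Q * X]mulrC; congr (_ * (_ * _)).
apply: eq_big_seq => r' r'rs; rewrite [in RHS]hq mupMl //.
rewrite rootE horner_exp hornerXsubC expf_eq0 subr_eq0 negb_and orbC.
by apply/orP; left; apply: contraNneq r_rs => <-.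
Qed.

Lemma size_mul_prod_XsubC_exp (rs : seq F) (m : F -> nat) q : q != 0 ->
  size (q * \prod_(r <- rs) ('X - r%:P) ^+ m r) = (size q + \sum_(r <- rs) m r)%N.
Proof.
elim: rs q => [|r rs IH] q q0; first by rewrite !big_nil mulr1 addn0.
rewrite !big_cons mulrA IH ?mulf_neq0 ?expf_neq0 ?polyXsubC_eq0 //.
by rewrite size_Mmonic ?monic_exp ?monicXsubC // size_exp_XsubC addnS addnA.
Qed.

End Multiplicity.

Lemma mup_deriv (R : numFieldType) (p : {poly R}) x : p != 0 -> root p x ->
  mup x p^`() = (mup x p).-1.
Proof.
move=> p0 px; have [q hp qx] := mup_factor x p0.
have [n hn] : exists n, mup x p = n.+1 by exists (mup x p).-1; rewrite prednK ?mup_gt0.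
have -> : p^`() = (q^`() * ('X - x%:P) + q *+ n.+1) * ('X - x%:P) ^+ n.
  by rewrite {1}hp hn derivM deriv_exp derivXsubC exprS; ring.
rewrite hn mupMr ?mup_XsubCX ?eqxx //.
by rewrite rootE !hornerE subrr mulr0 add0r hornerMn mulrn_eq0 negb_or.
Qed.

Lemma lead_coef_deriv (R : realDomainType) (p : {poly R}) :
  lead_coef p^`() = lead_coef p *+ (size p).-1.
Proof.
have [p_le1|p_gt1] := leqP (size p) 1.
  by rewrite [p]size1_polyC // derivC lead_coef0 lead_coefC size_polyC; case: (_ != 0).
by rewrite !lead_coefE size_deriv coef_deriv prednK // -subn1 subn_gt0.
Qed.

Section RealClosed.
Variable R : rcfType.
Implicit Types (p q : {poly R}) (s : seq R).

Definition odd_roots p := [seq r <- rootsR p | odd (mup r p)].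

Lemma mem_rootsR p x : p != 0 -> (x \in rootsR p) = root p x.
Proof. by move=> p0; rewrite -(roots_on_rootsR p0 x) in_itv. Qed.

Lemma mem_odd_roots p x : p != 0 ->
  (x \in odd_roots p) = root p x && odd (mup x p).
Proof. by move=> p0; rewrite mem_filter andbC mem_rootsR. Qed.

Lemma sgr_prod_sub s x : x \notin s ->
  Num.sg (\prod_(r <- s) (x - r)) = (-1) ^+ count (fun r => x < r) s.
Proof.
elim: s => [|r s IH]; first by rewrite big_nil sgr1.
rewrite in_cons negb_or => /andP [xr xs].
by rewrite big_cons sgrM sgrB xr IH // exprD.
Qed.

Lemma ltr_horner_deriv_ge0 p a b : (1 < size p)%N -> a < b ->
  (forall x, x \in `]a, b[ -> 0 <= p^`().[x]) -> p.[a] < p.[b].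
Proof.
move=> p_nonconst ab p'_ge0; have mono := ler_hornerW p'_ge0.
have a_ab : a \in `[a, b] by rewrite in_itv /= lexx ltW.
have b_ab : b \in `[a, b] by rewrite in_itv /= lexx ltW.
rewrite lt_neqAle mono ?(ltW ab) // andbT; apply/negP => /eqP pab.
set q := p - p.[a]%:P.
have q0 : q != 0.
  rewrite /q; apply: contraTneq p_nonconst => /subr0_eq ->.
  by rewrite -leqNgt size_polyC leq_b1.
have [c c_nbh] := neighpr_wit ab q0.
have /andP [ac cb] : a < c < b.
  move: c_nbh; rewrite /neighpr in_itv /= => /andP [-> c_next].
  have := next_root_in q a b; rewrite in_itv /= (max_idPl (ltW ab)) => /andP [_].
  exact: lt_le_trans c_next.
have := neighpr_root c_nbh; rewrite rootE /q !hornerE subr_eq0 => /eqP; apply.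
have c_ab : c \in `[a, b] by rewrite in_itv /= !ltW.
have pac : p.[a] <= p.[c] by apply: mono; rewrite ?ltW.
have pcb : p.[c] <= p.[b] by apply: mono; rewrite ?ltW.
by apply/eqP; rewrite eq_le pac pab pcb.
Qed.

Lemma sgr_horner_pinfty p : p != 0 ->
  exists M, forall x, M <= x -> Num.sg p.[x] = Num.sg (lead_coef p).
Proof.
move=> p0; exists (cauchy_bound p) => x Mx.
by apply: (sgp_pinftyP (ge_cauchy_bound p0)); rewrite in_itv /= Mx.
Qed.

Lemma sgr_horner_minfty p : p != 0 ->
  exists M, forall x, x <= M ->
    Num.sg p.[x] = Num.sg ((-1) ^+ (size p).-1 * lead_coef p).
Proof.
move=> p0; exists (- cauchy_bound p) => x xM.
by apply: (sgp_minftyP (le_cauchy_bound p0)); rewrite in_itv /= xM.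
Qed.

Lemma sgr_horner_near p x : p.[x] != 0 ->
  exists2 e, 0 < e & forall y, `|y - x| < e -> Num.sg p.[y] = Num.sg p.[x].
Proof.
move=> px0; have := @poly_cont _ x p `|p.[x]|; rewrite normr_gt0 => /(_ px0) [e e0 near_x].
exists e => // y /near_x; rewrite ltr_distl.
have [px_pos|px_neg] := ltrP 0 p.[x].
  by rewrite gtr0_norm // subrr => /andP [/gtr0_sg -> _]; rewrite gtr0_sg.
rewrite ler0_norm // opprK addrN => /andP [_ /ltr0_sg ->].
by rewrite ltr0_sg // lt_neqAle px0.
Qed.

End RealClosed.

Section RealRooted.
Variable R : realType.
Implicit Types (p q : {poly R}) (rs : seq R).

Lemma real_rooted_mul_prod_XsubC q rs (m : R -> nat) :
  (forall x, ~~ root q x) ->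
  real_rooted (q * \prod_(r <- rs) ('X - r%:P) ^+ m r) <-> (size q <= 1)%N.
Proof.
move=> q_noroot; rewrite /real_rooted (_ : (fun x : R => x%:C)%C = real_complex R) //.
have q0 : q != 0 by apply: contraNneq (q_noroot 0) => ->; rewrite root0.
split=> [rr|q_const z].
  apply: contraT; rewrite -ltnNge => q_nonconst.
  have /closed_rootP [z qz] : size (map_poly (real_complex R) q) != 1%N.
    by rewrite size_map_poly neq_ltn q_nonconst orbT.
  have /Creal_ImP/complex_realP [x zx] : 'Im z = 0.
    by apply: rr; rewrite rmorphM rootM qz.
  by move: qz; rewrite zx /root horner_map fmorph_eq0 => /negPn; rewrite q_noroot.
rewrite rmorphM rootM /= => /orP [|].
  rewrite [q]size1_polyC // map_polyC rootC fmorph_eq0 => q00.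
  by move: q0; rewrite [q]size1_polyC // polyC_eq0 q00.
elim: rs => [|r rs IH]; first by rewrite big_nil rmorph1 (negbTE (root1 _)).
rewrite big_cons rmorphM rootM => /orP [|//].
rewrite rmorphXn /= map_polyXsubC rootE horner_exp hornerXsubC expf_eq0 subr_eq0.
by case/andP => _ /eqP ->; apply/Creal_ImP/complex_realP; exists r.
Qed.

Lemma real_rooted_mup_sum p rs : p != 0 -> uniq rs ->
  (forall x, root p x -> x \in rs) ->
  real_rooted p <-> (\sum_(r <- rs) mup r p)%N = (size p).-1.
Proof.
move=> p0 urs prs; have [q hq q_noroot] := poly_factor_roots urs p0 prs.
have q0 : q != 0 by apply: contraNneq (q_noroot 0) => ->; rewrite root0.
have := size_mul_prod_XsubC_exp rs (fun r => mup r p) q0; rewrite -hq => size_p.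
rewrite {1}hq real_rooted_mul_prod_XsubC // size_p.
have q_pos : (0 < size q)%N by rewrite size_poly_gt0.
rewrite -subn1; set n := size q in q_pos *; set S := (\sum_(r <- rs) _)%N; split; lia.
Qed.

Lemma real_rooted_factor p : p != 0 -> real_rooted p ->
  p = lead_coef p *: \prod_(r <- rootsR p) ('X - r%:P) ^+ mup r p.
Proof.
move=> p0 rr; have prs x : root p x -> x \in rootsR p by rewrite mem_rootsR.
have [q hq q_noroot] := poly_factor_roots (uniq_roots _ _ _) p0 prs.
move: rr; rewrite {1}hq real_rooted_mul_prod_XsubC // => /size1_polyC q_const.
have -> : lead_coef p = q`_0.
  rewrite hq lead_coefM {1}q_const lead_coefC (monicP _) ?mulr1 //.
  by apply: monic_prod => r _; rewrite monic_exp ?monicXsubC.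
by rewrite {1}hq {1}q_const mul_polyC.
Qed.

Lemma odd_size_odd_roots p : p != 0 -> real_rooted p ->
  odd (size (odd_roots p)) = odd (size p).-1.
Proof.
move=> p0 rr; have prs x : root p x -> x \in rootsR p by rewrite mem_rootsR.
have /(real_rooted_mup_sum p0 (uniq_roots _ _ _) prs) <- := rr.
rewrite size_filter /rootsR; elim: (roots _ _ _) => [|r rs IH]; first by rewrite big_nil.
by rewrite big_cons /= !oddD IH oddb.
Qed.

Lemma horner_mul_prod_odd_roots_ge0 p y : p != 0 -> real_rooted p ->
  0 < lead_coef p -> 0 <= p.[y] * \prod_(r <- odd_roots p) (y - r).
Proof.
move=> p0 rr lc_gt0.
have -> : p.[y] = lead_coef p * \prod_(r <- rootsR p) (y - r) ^+ mup r p.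
  rewrite {1}(real_rooted_factor p0 rr) hornerZ horner_prod.
  by under eq_bigr do rewrite horner_exp hornerXsubC.
have -> : \prod_(r <- odd_roots p) (y - r) = \prod_(r <- rootsR p) (y - r) ^+ odd (mup r p).
  by rewrite big_filter big_mkcond; apply: eq_bigr => r _; case: ifP.
rewrite -mulrA -big_split mulr_ge0 ?(ltW lc_gt0) //.
by apply: prodr_ge0 => r _ /=; rewrite -exprD exprn_even_ge0 // oddD oddb addbb.
Qed.

Lemma real_rooted_deriv_mup_sum p rs : (1 < size p)%N -> real_rooted p^`() ->
  uniq rs -> (forall x, root p x || root p^`() x -> x \in rs) ->
  real_rooted p <-> \sum_(r <- rs) ((mup r p)%:Z - (mup r p^`())%:Z) = 1.
Proof.
move=> p_nonconst rr' urs prs.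
have p0 : p != 0 by rewrite -size_poly_gt0 ltnW.
have p'0 : p^`() != 0 by rewrite -size_poly_gt0 size_deriv -subn1 subn_gt0.
have prs' x : root p^`() x -> x \in rs by move=> px; apply: prs; rewrite px orbT.
have := proj1 (real_rooted_mup_sum p'0 urs prs') rr'; rewrite size_deriv => sum'.
rewrite (real_rooted_mup_sum p0 urs) => [|x px]; last by apply: prs; rewrite px.
rewrite sumrB -!(big_morph Posz PoszD (erefl _)) sum'.
move: p_nonconst; rewrite -!subn1; split; lia.
Qed.

Lemma inflection_odd_mup (f : {poly R}) x : f^`(2) != 0 ->
  inflection f x <-> odd (mup x f^`(2)).
Proof.
set g := f^`(2) => g0; have [q hg qx] := mup_factor x g0; set m := mup x g in hg *.
have [e e0 q_near] := sgr_horner_near qx.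
have sg_g y : x - e < y < x + e -> Num.sg g.[y] = Num.sg (y - x) ^+ m * Num.sg q.[x].
  rewrite -ltr_distl => /q_near <-.
  by rewrite hg hornerM horner_exp hornerXsubC sgrM sgrX mulrC.
have sg_left y : x - e < y < x -> Num.sg g.[y] = (-1) ^+ m * Num.sg q.[x].
  case/andP => ey yx; rewrite sg_g; last by apply/andP; split; lra.
  by rewrite (@ltr0_sg _ (y - x)) // subr_lt0.
have sg_right y : x < y < x + e -> Num.sg g.[y] = Num.sg q.[x].
  case/andP => xy ye; rewrite sg_g; last by apply/andP; split; lra.
  by rewrite (@gtr0_sg _ (y - x)) ?subr_gt0 // expr1n mul1r.
split.
  case=> e' e'0 sign_change; apply: contraT => m_even.
  have emin_e : Num.min e e' <= e by rewrite ge_min lexx.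
  have emin_e' : Num.min e e' <= e' by rewrite ge_min lexx orbT.
  have emin0 : 0 < Num.min e e' by rewrite lt_min e0 e'0.
  set d := Num.min e e' in emin_e emin_e' emin0.
  have xl : x - e' < x - d / 2 < x by apply/andP; split; lra.
  have xr : x < x + d / 2 < x + e' by apply/andP; split; lra.
  have : Num.sg g.[x - d / 2] = Num.sg g.[x + d / 2].
    rewrite sg_left ?sg_right; try by apply/andP; split; lra.
    by rewrite -signr_odd (negbTE m_even) mul1r.
  case: sign_change => [[/(_ _ xl) gl /(_ _ xr) gr]|[/(_ _ xl) gl /(_ _ xr) gr]].
    by rewrite (ltr0_sg gl) (gtr0_sg gr) => /eqP; rewrite eq_sym -addr_eq0 paddr_eq0 ?oner_eq0.
  by rewrite (gtr0_sg gl) (ltr0_sg gr) => /eqP; rewrite -addr_eq0 paddr_eq0 ?oner_eq0.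
move=> m_odd; exists e => //; rewrite -signr_odd m_odd expr1 mulN1r in sg_left.
have [q_pos|q_neg] := ltrP 0 q.[x].
  left; split=> y.
    by move/sg_left/eqP; rewrite (gtr0_sg q_pos) sgr_cp0.
  by move/sg_right/eqP; rewrite (gtr0_sg q_pos) sgr_cp0.
have {}q_neg : q.[x] < 0 by rewrite lt_neqAle qx q_neg.
right; split=> y.
  by move/sg_left/eqP; rewrite (ltr0_sg q_neg) opprK sgr_cp0.
by move/sg_right/eqP; rewrite (ltr0_sg q_neg) sgr_cp0.
Qed.

Lemma inflection_critical (f : {poly R}) x : f^`() != 0 -> root f^`() x ->
  inflection f x <-> ~~ odd (mup x f^`()).
Proof.
move=> f'0 f'x; have f'_nonconst := root_size_gt1 f'0 f'x.
have f''0 : f^`()^`() != 0 by rewrite -size_poly_gt0 size_deriv -subn1 subn_gt0.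
rewrite inflection_odd_mup derivSn derivn1 // mup_deriv //.
by have := mup_gt0 x f'0; rewrite f'x; case: (mup x _) => //= n _; rewrite negbK.
Qed.

Lemma mup_eq1_or_inflection (f : {poly R}) x : f^`() != 0 -> root f x ->
  x \notin odd_roots f^`() -> mup x f = 1%N \/ inflection f x.
Proof.
move=> f'0 fx; rewrite mem_odd_roots // negb_and.
have f0 : f != 0 by apply: contraNneq f'0 => ->; rewrite deriv0.
case: (boolP (root f^`() x)) => [f'x /= m_even|f'x _]; first by right; apply/inflection_critical.
left; have := mup_deriv f0 fx; rewrite mupNroot ?f'x //.
by have := mup_gt0 x f0; rewrite fx; case: (mup x f) => [|[|]].
Qed.

Lemma perm_non_inflection_critical (f : {poly R}) (s : seq R) :
  f^`() != 0 -> uniq s ->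
  (forall x, x \in s <-> (root f^`() x /\ ~ inflection f x)) ->
  perm_eq s (odd_roots f^`()).
Proof.
move=> f'0 us hs; apply: uniq_perm => //; first exact/filter_uniq/uniq_roots.
move=> x; rewrite mem_odd_roots //; apply/idP/andP => [/hs [f'x not_infl]|[f'x m_odd]].
  split=> //; apply: contraT => m_even; exfalso; apply: not_infl.
  exact/(inflection_critical f'0 f'x).
by apply/hs; split=> // /(inflection_critical f'0 f'x); rewrite m_odd.
Qed.

End RealRooted.

Section Segments.
Variables (R : realType) (s : seq R).
Hypothesis s_sorted : sorted (fun a b => b < a) s.

Local Notation k := (size s).

Definition cseg i x := ((k < i)%N || (s`_i.-1 <= x)) && ((i <= 1)%N || (x <= s`_i.-2)).

Lemma seg_cseg i x : seg s i x -> cseg i x.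
Proof.
case/andP => lo hi; apply/andP; split.
  by case/orP: lo => [->//|/ltW ->]; rewrite orbT.
by case/orP: hi => [->//|/ltW ->]; rewrite orbT.
Qed.

Lemma cseg_seg i x y c : cseg i x -> cseg i y -> x < c -> c < y -> seg s i c.
Proof.
case/andP => lo _ /andP [_ hi] xc cy; apply/andP; split.
  by case/orP: lo => [->//|xlo]; rewrite (le_lt_trans xlo xc) orbT.
by case/orP: hi => [->//|yhi]; rewrite (lt_le_trans cy yhi) orbT.
Qed.

Lemma nth_lt_sorted j1 j2 : (j1 < j2 < k)%N -> s`_j2 < s`_j1.
Proof.
case/andP => j12 j2k; have lt_trans' : transitive (fun a b : R => b < a).
  by move=> a b c ba cb; exact: lt_trans cb ba.
by apply: (sorted_ltn_nth lt_trans' 0 s_sorted) => //; rewrite inE (ltn_trans j12).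
Qed.

Lemma seg_take_drop i y : (1 <= i <= k.+1)%N -> seg s i y ->
  (forall r, r \in take i.-1 s -> y < r) /\ (forall r, r \in drop i.-1 s -> r < y).
Proof.
move=> /andP [i1 ik] /andP [lo hi]; split=> r /(nthP 0) [j].
  rewrite size_take_min ltn_min => /andP [ji jk] <-; rewrite nth_take //.
  case/orP: hi => [i_le1|yhi]; first by move: ji; rewrite -subn1; lia.
  apply: (lt_le_trans yhi); have [->//|jlt] := eqVneq j i.-2.
  (* [set] merges the two elaborations of [size s] into one atom for [lia]. *)
  apply/ltW/nth_lt_sorted; move: ji jk jlt; rewrite -!subn1; set n := size s; lia.
rewrite size_drop => jk <-; rewrite nth_drop.
case/orP: lo => [ki|ylo].
  by exfalso; move: jk ki ik; rewrite -!subn1; set n := size s; lia.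
apply: le_lt_trans ylo; have [->|jpos] := posnP j; first by rewrite addn0.
apply/ltW/nth_lt_sorted; move: jk jpos; rewrite -!subn1; set n := size s; lia.
Qed.

Lemma seg_count i y : (1 <= i <= k.+1)%N -> seg s i y ->
  y \notin s /\ count (fun r => y < r) s = i.-1.
Proof.
move=> hi hy; have [gt_take lt_drop] := seg_take_drop hi hy.
rewrite -(cat_take_drop i.-1 s) mem_cat count_cat negb_or; split.
  by apply/andP; split; apply/negP; [move/gt_take | move/lt_drop]; rewrite ltxx.
have /eqP -> : count (fun r => y < r) (drop i.-1 s) == 0%N.
  by rewrite -leqn0 leqNgt -has_count; apply/hasPn => r /lt_drop/lt_gtF ->.
have /eqP -> : count (fun r => y < r) (take i.-1 s) == size (take i.-1 s).
  by rewrite -all_count; apply/allP => r /gt_take.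
by rewrite addn0 size_takel //; case/andP: hi; rewrite -subn1; set n := size s; lia.
Qed.

Lemma cseg_near i : (1 <= i <= k)%N ->
  exists2 e, 0 < e & forall y, `|y - s`_i.-1| < e ->
  (s`_i.-1 <= y -> cseg i y) /\ (y <= s`_i.-1 -> cseg i.+1 y).
Proof.
case/andP => i1 ik; set a := s`_i.-1.
pose dR := if (1 < i)%N then s`_i.-2 - a else 1.
pose dL := if (i < k)%N then a - s`_i else 1.
have dR0 : 0 < dR.
  rewrite /dR; case: ifP => // i2; rewrite subr_gt0 nth_lt_sorted //.
  by move: i2 ik; rewrite -!subn1; lia.
have dL0 : 0 < dL.
  by rewrite /dL; case: ifP => // i_k; rewrite subr_gt0 nth_lt_sorted // prednK ?leqnn.
exists (Num.min dL dR) => [|y]; first by rewrite lt_min dL0 dR0.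
rewrite lt_min !ltr_distl => /andP [/andP [yL _] /andP [_ yR]].
split=> [ay|ya]; apply/andP; split; rewrite /= ?ay ?ya ?orbT //.
  case: (leqP i 1) => //= i2; move: yR; rewrite /dR i2 => yR; lra.
case: (ltnP i k) => [i_k|k_i]; last by rewrite ltnS k_i.
by move: yL; rewrite /dL i_k => yL; apply/orP; right; lra.
Qed.

Lemma seg_nonempty i : (1 <= i <= k.+1)%N -> exists x, seg s i x.
Proof.
case/andP => i1 ik; rewrite /seg.
case: (ltnP k i) => ki; case: (leqP i 1) => i2 /=.
- by exists 0.
- by exists (s`_i.-2 - 1); lra.
- by exists (s`_i.-1 + 1); lra.
have : s`_i.-1 < s`_i.-2 by apply: nth_lt_sorted; move: i2 ki; rewrite -!subn1; lia.
by exists ((s`_i.-1 + s`_i.-2) / 2); apply/andP; split; lra.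
Qed.

End Segments.

Section SignPattern.
Variables (R : realType) (f : {poly R}) (s : seq R).
Hypothesis s_sorted : sorted (fun a b => b < a) s.
Hypothesis f_nonconst : (1 < size f)%N.
(* f' changes sign exactly at the points of s. *)
Hypothesis deriv_mul_prod_ge0 : forall y, 0 <= f^`().[y] * \prod_(r <- s) (y - r).

Local Notation k := (size s).
Local Notation cseg := (cseg s).

Lemma seg_deriv_sign i y : (1 <= i <= k.+1)%N -> seg s i y ->
  0 <= (-1) ^+ i.-1 * f^`().[y].
Proof.
move=> hi hy; have [ys cnt] := seg_count s_sorted hi hy.
have := sgr_prod_sub ys; rewrite cnt; set P := \prod_(r <- s) (y - r) => sgP.
have P0 : P != 0 by apply: contra_eq_neq sgP => ->; rewrite sgr0 eq_sym signr_eq0.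
have := deriv_mul_prod_ge0 y; rewrite -/P -[P]mulr_sg_norm sgP mulrA mulrC.
by rewrite pmulr_rge0 ?normr_gt0 // mulrC.
Qed.

Lemma cseg_mono i x y : (1 <= i <= k.+1)%N -> cseg i x -> cseg i y -> x < y ->
  0 < (-1) ^+ i.-1 * (f.[y] - f.[x]).
Proof.
move=> hi hx hy xy; set e : R := (-1) ^+ i.-1.
have e0 : e != 0 by rewrite signr_eq0.
have := @ltr_horner_deriv_ge0 _ (e *: f) x y; rewrite !hornerZ size_scale // derivZ.
rewrite mulrBr subr_gt0; apply => // c /andP [xc cy]; rewrite hornerZ.
exact: seg_deriv_sign hi (cseg_seg hx hy xc cy).
Qed.

Lemma cseg_mono_le i x y : (1 <= i <= k.+1)%N -> cseg i x -> cseg i y -> x <= y ->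
  0 <= (-1) ^+ i.-1 * (f.[y] - f.[x]).
Proof.
move=> hi hx hy; rewrite le_eqVlt => /predU1P [->|xy]; first by rewrite subrr mulr0.
exact/ltW/cseg_mono.
Qed.

Lemma seg_monotone i : (1 <= i <= k.+1)%N -> monotone_on f (seg s i).
Proof.
move=> hi; have mono x y := cseg_mono_le hi (seg_cseg x) (seg_cseg y).
case: i hi mono => // i _ /= mono; rewrite -signr_odd in mono.
by case: (odd i) mono => /= mono; [right|left] => x y sx sy /(mono _ _ sx sy);
  rewrite ?expr1 ?expr0 ?mulN1r ?mul1r ?oppr_ge0 ?subr_ge0 ?subr_le0.
Qed.

Lemma cseg_local_sign i : (1 <= i <= k)%N -> exists2 e, 0 < e & forall y,
  `|y - s`_i.-1| < e -> 0 <= (-1) ^+ i.-1 * (f.[y] - f.[s`_i.-1]).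
Proof.
case: i => // i hi; have [e e0 near_a] := cseg_near s_sorted hi; exists e => // y ye /=.
have hi1 : (1 <= i.+1 <= k.+1)%N by case/andP: hi => _ /leqW.
have hi2 : (1 <= i.+2 <= k.+1)%N by case/andP: hi.
have a_near : `|s`_i - s`_i| < e by rewrite subrr normr0.
have [a_cseg a_cseg'] := near_a _ a_near.
have [ay|ya] := leP s`_i y.
  exact: (cseg_mono_le hi1 (a_cseg (lexx _)) ((near_a y ye).1 ay) ay).
have := cseg_mono_le hi2 ((near_a y ye).2 (ltW ya)) (a_cseg' (lexx _)) (ltW ya).
by rewrite /= exprS mulN1r mulNr -mulrN opprB.
Qed.

Lemma seg_local_extremum i : (1 <= i <= k)%N ->
  (odd i -> local_min f s`_i.-1) /\ (~~ odd i -> local_max f s`_i.-1).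
Proof.
move=> hi; have [e e0 sgn] := cseg_local_sign hi.
case: i hi sgn => // i _ /= sgn; rewrite -signr_odd in sgn.
by case: (odd i) sgn => /= sgn; split=> // _; exists e => // y /sgn;
  rewrite ?expr1 ?expr0 ?mulN1r ?mul1r ?oppr_ge0 ?subr_ge0 ?subr_le0.
Qed.

Hypothesis lead_coef_gt0 : 0 < lead_coef f.

Lemma seg_lower_end i x : (1 <= i <= k.+1)%N -> seg s i x ->
  exists a, [/\ a < x, cseg i a & Num.sg f.[a] = Num.sg (fval f s i)].
Proof.
case: i => // i /andP [_ ik] /andP [lo hi]; rewrite /fval /=.
have up a : a < x -> (i.+1 <= 1)%N || (a <= s`_i.-1).
  by move=> ax; case/orP: hi => [->//|xs]; rewrite (ltW (lt_trans ax xs)) orbT.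
case: (ltnP k i.+1) lo => [ki _|ik' /= ax].
  have f0 : f != 0 by rewrite -size_poly_gt0 ltnW.
  have [M M_sg] := sgr_horner_minfty f0.
  have minM : Num.min M (x - 1) <= M by rewrite ge_min lexx.
  have minx : Num.min M (x - 1) <= x - 1 by rewrite ge_min lexx orbT.
  exists (Num.min M (x - 1)); split; first by lra.
    by rewrite /cseg ki up //; lra.
  by rewrite M_sg // sgrM (gtr0_sg lead_coef_gt0) mulr1.
by exists s`_i; rewrite /cseg ltnNge ik' lexx up.
Qed.

Lemma seg_upper_end i x : (1 <= i <= k.+1)%N -> seg s i x ->
  exists b, [/\ x < b, cseg i b & Num.sg f.[b] = Num.sg (fval f s i.-1)].
Proof.
case: i => // i /andP [_ ik] /andP [lo hi]; rewrite /fval /=.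
have low b : x < b -> (k < i.+1)%N || (s`_i <= b).
  by move=> xb; case/orP: lo => [->//|sx]; rewrite (ltW (lt_trans sx xb)) orbT.
case: i ik lo hi low => [|i] ik lo hi low /=.
  have f0 : f != 0 by rewrite -size_poly_gt0 ltnW.
  have [M M_sg] := sgr_horner_pinfty f0.
  have maxM : M <= Num.max M (x + 1) by rewrite le_max lexx.
  have maxx : x + 1 <= Num.max M (x + 1) by rewrite le_max lexx orbT.
  exists (Num.max M (x + 1)); split; first by lra.
    by rewrite /cseg low //; lra.
  by rewrite M_sg // (gtr0_sg lead_coef_gt0) sgr1.
have xs : x < s`_i by case/orP: hi.
exists s`_i; split => //; first by rewrite /cseg low //= lexx orbT.
by rewrite ltnNge (ik : (i.+1 <= k)%N).
Qed.

Lemma seg_inj i x y : (1 <= i <= k.+1)%N -> seg s i x -> seg s i y ->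
  f.[x] = f.[y] -> x = y.
Proof.
move=> hi sx sy fxy; have [xy|yx|//] := ltgtP x y.
  by have := cseg_mono hi (seg_cseg sx) (seg_cseg sy) xy; rewrite fxy subrr mulr0 ltxx.
by have := cseg_mono hi (seg_cseg sy) (seg_cseg sx) yx; rewrite fxy subrr mulr0 ltxx.
Qed.

Lemma seg_noroot i x : (1 <= i <= k.+1)%N -> 0 <= fval f s i * fval f s i.-1 ->
  seg s i x -> ~~ root f x.
Proof.
move=> hi fval_ge0 sx; apply/negP => /rootP fx0.
have [a [ax a_cseg sg_a]] := seg_lower_end hi sx.
have [b [xb b_cseg sg_b]] := seg_upper_end hi sx.
have := cseg_mono hi a_cseg (seg_cseg sx) ax.
have := cseg_mono hi (seg_cseg sx) b_cseg xb.
rewrite fx0 sub0r subr0 mulrN oppr_gt0 => fb fa.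
have : (-1) ^+ i.-1 * f.[a] * ((-1) ^+ i.-1 * f.[b]) < 0 by rewrite nmulr_rlt0.
rewrite mulrACA -expr2 sqrr_sign mul1r => fab.
move: fval_ge0; rewrite -sgr_ge0 sgrM -sg_a -sg_b -sgrM ltr0_sg //.
by rewrite oppr_ge0 ler10.
Qed.

Lemma seg_root_unique i : (1 <= i <= k.+1)%N -> fval f s i * fval f s i.-1 < 0 ->
  exists x, [/\ seg s i x, root f x & forall y, seg s i y -> root f y -> y = x].
Proof.
move=> hi fval_lt0; have [x0 sx0] := seg_nonempty s_sorted hi.
have [a [ax a_cseg sg_a]] := seg_lower_end hi sx0.
have [b [xb b_cseg sg_b]] := seg_upper_end hi sx0.
have : Num.sg (f.[a] * f.[b]) = -1 by rewrite sgrM sg_a sg_b -sgrM ltr0_sg.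
move=> /eqP; rewrite sgr_cp0 => fab.
have [z z_ab fz] := poly_ivtoo (ltW (lt_trans ax xb)) fab.
have sz : seg s i z by apply: cseg_seg a_cseg b_cseg _ _; rewrite ?(itvP z_ab).
by exists z; split=> // y sy /rootP fy; apply: seg_inj hi sy sz _; rewrite fy (rootP fz).
Qed.

End SignPattern.

Unset Implicit Arguments.

Theorem lemmaA2 (R : realType) (f : {poly R}) (K : nat)
  (hK : (1 < K)%N) (hdeg : size f = K.+1) (hlc : 0 < lead_coef f)
  (hreal : real_rooted f^`())
  (s : seq R) (hsort : sorted (fun a b => b < a) s)
  (hs : forall x, x \in s <-> (root f^`() x /\ ~ inflection f x)) :
  let k := size s in
  (* (I) *)
  (forall i, (1 <= i <= k)%N ->
     (odd i -> local_min f s`_i.-1) /\ (~~ odd i -> local_max f s`_i.-1)) /\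
  (* (II) *)
  (odd k = ~~ odd K) /\
  (* (III) *)
  (forall i, (1 <= i <= k.+1)%N -> monotone_on f (seg s i)) /\
  (* (IV) *)
  (forall i, (1 <= i <= k.+1)%N ->
     (0 <= fval f s i * fval f s i.-1 -> forall x, seg s i x -> ~~ root f x) /\
     (fval f s i * fval f s i.-1 < 0 ->
        exists x, [/\ seg s i x, root f x,
                      (forall y, seg s i y -> root f y -> y = x) &
                      (mup x f = 1%N \/ inflection f x)])) /\
  (* (V) *)
  ((forall b, root f^`() b -> (1 < mup b f^`())%N -> root f b) ->
     forall i, (1 <= i <= k.+1)%N -> 0 <= fval f s i * fval f s i.-1 ->
       forall x, seg s i x -> ~~ root f^`() x) /\
  (* (VI): S(-oo,+oo) computed over any duplicate-free list rs of reals
     containing every real root of f and of f'. *)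
  (forall rs : seq R, uniq rs ->
     (forall r, root f r || root f^`() r -> r \in rs) ->
     (real_rooted f <->
        \sum_(r <- rs) ((mup r f)%:Z - (mup r f^`())%:Z) = 1)).
Proof.
move=> k.
have f_nonconst : (1 < size f)%N by rewrite hdeg ltnS ltnW.
have f'0 : f^`() != 0 by rewrite -size_poly_gt0 size_deriv hdeg ltnW.
have us : uniq s by rewrite -rev_uniq lt_sorted_uniq // rev_sorted.
have s_odd := perm_non_inflection_critical f'0 us hs.
have f'_sign y : 0 <= f^`().[y] * \prod_(r <- s) (y - r).
  rewrite (perm_big _ s_odd) horner_mul_prod_odd_roots_ge0 //.
  by rewrite lead_coef_deriv hdeg pmulrn_lgt0 // ltnW.
split; first by move=> i hi; apply: seg_local_extremum.
split.
  rewrite /k (perm_size s_odd) odd_size_odd_roots // size_deriv hdeg.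
  by rewrite -[K in RHS](prednK (ltnW hK)) /= negbK.
split; first by move=> i hi; apply: seg_monotone.
split.
  move=> i hi; split; first by move=> fval_ge0 x; apply: seg_noroot.
  move=> /(seg_root_unique hsort f_nonconst f'_sign hlc hi) [x [sx fx x_uniq]].
  exists x; split=> //; apply: mup_eq1_or_inflection => //.
  by rewrite -(perm_mem s_odd); have [] := seg_count hsort hi sx.
split.
  move=> hmult i hi fval_ge0 x sx; apply/negP => f'x.
  have [xs _] := seg_count hsort hi sx.
  have m_gt1 : (1 < mup x f^`())%N.
    move: xs; rewrite (perm_mem s_odd) mem_odd_roots // f'x /=.
    by have := mup_gt0 x f'0; rewrite f'x; case: (mup x _) => [|[|]].
  by have := seg_noroot hsort f_nonconst f'_sign hlc hi fval_ge0 sx; rewrite hmult.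
by move=> rs urs hrs; apply: real_rooted_deriv_mup_sum.
Qed.
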